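(* For $n\ge1$ choose uniformly at random one of the $\binom{3n}{n,n,n}$ lattice paths from $(n,n,n)$ to $(0,0,0)$ with steps $(-1,0,0),(0,-1,0),(0,0,-1)$, and let $X_n$ be the integer $k$ such that the first visit of the path to the diagonal $\{x=y=z\}$ after the start is at $(k,k,k)$. Then $$\mathbb{P}(X_n=k)=\frac{a_{n-k,1}\binom{3k}{k,k,k}}{\binom{3n}{n,n,n}},\qquad0\le k\le n-1,$$ where $a_{m,1}$ is the number of such paths from $(m,m,m)$ to the origin not visiting the diagonal strictly between start and end ($a_{0,1}=0$). Moreover $n-X_n$ converges in distribution to a random variable $X$ with $\mathbb{P}(X=\ell)=a_{\ell,1}/3^{3\ell}$, $\ell\ge0$. *)

From HB Require Import structures.
From mathcomp Require Import all_boot all_order all_algebra.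
From mathcomp Require Import all_classical all_reals all_analysis.
Set Implicit Arguments. Unset Strict Implicit. Unset Printing Implicit Defensive.
Import Order.TTheory GRing.Theory Num.Theory.
Local Open Scope ring_scope.

(* A lattice path from (n,n,n) to (0,0,0) is encoded by its sequence of 3n
   steps; step d : 'I_3 decreases coordinate d by one.  The endpoint
   condition says that each step direction is used exactly n times. *)
Definition path_steps (n : nat) (p : {ffun 'I_(3 * n) -> 'I_3}) : seq 'I_3 :=
  [seq p i | i : 'I_(3 * n)].

Definition is_lpath (n : nat) (p : {ffun 'I_(3 * n) -> 'I_3}) : bool :=
  [forall d : 'I_3, count (pred1 d) (path_steps p) == n].

Definition lpaths (n : nat) : {set {ffun 'I_(3 * n) -> 'I_3}} :=
  [set p | is_lpath p].

(* After performing the steps s from (n,n,n), the position is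
   (n - #0-steps, n - #1-steps, n - #2-steps); it lies on the diagonal
   x = y = z iff the three step counts agree. *)
Definition st0 : 'I_3 := @Ordinal 3 0 isT.
Definition st1 : 'I_3 := @Ordinal 3 1 isT.
Definition st2 : 'I_3 := @Ordinal 3 2 isT.

Definition on_diag (s : seq 'I_3) : bool :=
  (count (pred1 st0) s == count (pred1 st1) s) &&
  (count (pred1 st1) s == count (pred1 st2) s).

Definition first_return_time (n : nat) (p : {ffun 'I_(3 * n) -> 'I_3}) : nat :=
  (find (fun i => on_diag (take i.+1 (path_steps p))) (iota 0 (3 * n))).+1.

Definition Xn (n : nat) (p : {ffun 'I_(3 * n) -> 'I_3}) : nat :=
  (n - count (pred1 st0) (take (first_return_time p) (path_steps p)))%N.

Definition avoids_diag (n : nat) (p : {ffun 'I_(3 * n) -> 'I_3}) : bool :=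
  [forall i : 'I_(3 * n), (0 < i)%N ==> ~~ on_diag (take i (path_steps p))].

Definition a1 (m : nat) : nat :=
  if m == 0%N then 0%N else #|[set p in lpaths m | avoids_diag p]|.

Definition multinom3 (k : nat) : nat := ('C(3 * k, k) * 'C(2 * k, k))%N.

Definition probX (R : realType) (n : nat) (E : pred nat) : R :=
  (#|[set p in lpaths n | E (Xn p)]|)%:R / (#|lpaths n|)%:R.

From HB Require Import structures.
From mathcomp Require Import all_boot all_order all_algebra.
From mathcomp Require Import all_classical all_reals all_analysis.
From mathcomp Require Import zify ring lra.
Import Order.TTheory GRing.Theory Num.Theory.
Import numFieldNormedType.Exports.

Set Implicit Arguments.
Unset Strict Implicit.
Unset Printing Implicit Defensive.

(* Cutting a path at its first return to the diagonal, reached after 3l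
   steps at (n-l, n-l, n-l), splits it into a diagonal-avoiding path of 3l
   steps followed by an arbitrary path of 3(n-l) steps, so exactly
   a_{l,1} binom(3(n-l); n-l, n-l, n-l) paths have n - X_n = l; this is the
   exact formula.  As binom(3m; m,m,m) / binom(3(m+1); m+1,m+1,m+1) -> 1/27,
   it also gives P(n - X_n = l) -> f_l := a_{l,1} / 27^l, and sum_l f_l <= 1
   because the partial sums are limits of probabilities.  For the reverse
   inequality, the same decomposition yields the renewal equation
   u_n = sum_l f_l u_{n-l} (n >= 1) for u_n := binom(3n; n,n,n) / 27^n, whence
   (1 - f_0 - ... - f_{N-1}) (u_0 + ... + u_{N-1}) <= 1; since u_n >= 2/(9n)
   the partial sums of u diverge and sum_l f_l = 1. *)

Section Words.
Variable T : finType.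

Fixpoint words (m : nat) : seq (seq T) :=
  if m is m'.+1 then [seq x :: s | x <- enum T, s <- words m'] else [:: [::]].

Lemma mem_words m s : (s \in words m) = (size s == m).
Proof.
elim: m s => [|m IHm] [|x s] //=.
  by apply/allpairsP => -[[y t] /= [_ _]].
rewrite eqSS -IHm; apply/allpairsP/idP => [[[y t] /= [_ t_m [_ ->]]] // | s_m].
by exists (x, s); rewrite mem_enum.
Qed.

Lemma uniq_words m : uniq (words m).
Proof.
elim: m => //= m IHm; rewrite allpairs_uniq ?enum_uniq //.
by move=> [x s] [y t] _ _ [-> ->].
Qed.

Lemma count_words_cons (P : pred (seq T)) m :
  count P (words m.+1) = \sum_(x : T) count (fun s => P (x :: s)) (words m).
Proof.
rewrite /= count_flatten sumnE big_map big_map big_enum /=.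
by apply: eq_bigr => x _; rewrite count_map.
Qed.

Lemma count_words_take_drop (P Q : pred (seq T)) a b :
  count (fun s => P (take a s) && Q (drop a s)) (words (a + b)) =
  count P (words a) * count Q (words b).
Proof.
elim: a P => [|a IHa] P.
  rewrite add0n /= addn0 (eq_count (a2 := fun s => P [::] && Q s)) => [|s].
    by case: (P [::]); rewrite ?mul1n // (@eq_count _ _ pred0) ?count_pred0.
  by rewrite take0 drop0.
rewrite addSn !count_words_cons big_distrl /=.
by apply: eq_bigr => x _; rewrite -IHa.
Qed.

Lemma count_words_codom m (P : pred (seq T)) :
  #|[set p : {ffun 'I_m -> T} | P (codom p)]| = count P (words m).
Proof.
rewrite cardsE cardE /enum_mem size_filter -enumT.
rewrite (eq_count (a2 := fun p : {ffun 'I_m -> T} => P (codom p))) // -count_map.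
apply/permP; apply: uniq_perm; rewrite ?uniq_words //.
  rewrite map_inj_uniq ?enum_uniq // => p q pq.
  by apply: (can_inj fgraphK); apply: val_inj; rewrite /= -!codom_ffun.
move=> s; rewrite mem_words; apply/mapP/idP => [[p _ ->]|s_m].
  by rewrite size_codom card_ord.
exists [ffun i => tnth (Tuple s_m) i]; first by rewrite mem_enum.
by rewrite codomE (eq_map (ffunE _)) map_tnth_enum.
Qed.

Definition has_counts (c : T -> nat) (s : seq T) : bool :=
  [forall x, count_mem x s == c x].

Lemma has_counts_cons c x s : 0 < c x ->
  has_counts c (x :: s) = has_counts (fun y => c y - (y == x)) s.
Proof.
move=> cx_gt0; apply: eq_forallb => y /=; rewrite [y == x]eq_sym.
by case: (x =P y) => [<-|_] /=; apply/eqP/eqP; lia.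
Qed.

Lemma count_has_counts_fact (c : T -> nat) :
  count (has_counts c) (words (\sum_x c x)) * \prod_x (c x)`! = (\sum_x c x)`!.
Proof.
move sum_c: (\sum_x c x) => m.
elim: m c sum_c => [|m IHm] c sum_c.
  have c0 x : c x = 0.
    by apply/eqP; move: sum_c => /eqP; rewrite sum_nat_eq0 => /forallP/(_ x).
  have nil_c : has_counts c [::] by apply/forallP => x; rewrite c0.
  by rewrite /= nil_c big1 // => x _; rewrite c0.
rewrite count_words_cons big_distrl factS -[in X in X * _]sum_c big_distrl /=.
apply: eq_bigr => x _.
case cx: (c x) => [|k].
  rewrite mul0n (@eq_count _ _ pred0) ?count_pred0 // => s.
  by apply/negbTE/negP => /forallP/(_ x); rewrite cx /= eqxx.
pose c' y := c y - (y == x).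
have sum_c' : \sum_y c' y = m.
  rewrite (bigD1 x) //= (eq_bigr c) => [|y /negbTE yx]; last by rewrite /c' yx subn0.
  by move: sum_c; rewrite (bigD1 x) //= /c' eqxx cx; lia.
have prod_c : \prod_y (c y)`! = k.+1 * \prod_y (c' y)`!.
  rewrite (bigD1 x) // [X in _ = _ * X](bigD1 x) //= /c' eqxx cx factS subn1 /= mulnA.
  by congr (_ * _); apply: eq_bigr => y /negbTE ->; rewrite subn0.
rewrite (eq_count (a2 := has_counts c')) => [|s]; last by rewrite has_counts_cons ?cx.
by rewrite prod_c mulnCA (IHm c').
Qed.

Lemma has_counts_take_drop (c c1 : T -> nat) k s : (forall x, c1 x <= c x) ->
  has_counts c s && has_counts c1 (take k s) =
  has_counts c1 (take k s) && has_counts (fun x => c x - c1 x) (drop k s).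
Proof.
move=> c1_c.
have split_x x : count_mem x s = count_mem x (take k s) + count_mem x (drop k s).
  by rewrite -count_cat cat_take_drop.
apply/andP/andP => -[/forallP H1 /forallP H2]; split; apply/forallP => x;
  move: (H1 x) (H2 x) (c1_c x); rewrite ?split_x => /eqP + /eqP;
  set a := count_mem x (take k s); set b := count_mem x (drop k s); lia.
Qed.

End Words.

Lemma card_set_lt (T : finType) (A : {set T}) (h : T -> nat) K :
  #|[set x in A | h x < K]| = \sum_(j < K) #|[set x in A | h x == j]|.
Proof.
elim: K => [|K IHK].
  rewrite big_ord0; apply/eqP; rewrite cards_eq0.
  by apply/eqP/setP => x; rewrite !inE andbF.
rewrite big_ord_recr /= -IHK -(cardsID [set x | h x < K] [set x in A | h x < K.+1]).
congr (_ + _); apply: eq_card => x; rewrite !inE; case: (x \in A); rewrite ?andbF //=.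
  exact/andb_idl/ltnW.
by rewrite -leqNgt ltnS eqn_leq andbC.
Qed.

Lemma forall_ord3 (P : pred 'I_3) : [forall d, P d] = [&& P st0, P st1 & P st2].
Proof.
apply/forallP/and3P => [H | [P0 P1 P2]]; first by split; apply: H.
by case=> [[|[|[|//]]] d]; rewrite (bool_irrelevance d isT).
Qed.

Lemma size_count3 (s : seq 'I_3) :
  size s = count_mem st0 s + count_mem st1 s + count_mem st2 s.
Proof. by elim: s => //= -[[|[|[|//]]] ?] s ->; rewrite !eqE /=; lia. Qed.

Notation balanced n := (has_counts (fun _ : 'I_3 => n)).

Lemma balancedE n s : balanced n s = on_diag s && (size s == 3 * n).
Proof.
rewrite /has_counts forall_ord3 /on_diag size_count3.
apply/and3P/andP => [[/eqP-> /eqP-> /eqP->]|[/andP[/eqP-> /eqP->] /eqP size_s]].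
  by rewrite !eqxx; split => //; apply/eqP; lia.
by move: size_s; set c := count_mem st2 s => size_s; split; apply/eqP; lia.
Qed.

Lemma size_on_diag s : on_diag s -> size s = 3 * count_mem st0 s.
Proof. by rewrite /on_diag size_count3 => /andP[/eqP <- /eqP <-]; lia. Qed.

Lemma multinom3_fact n : multinom3 n * n`! ^ 3 = (3 * n)`!.
Proof.
have e3 := @bin_fact (3 * n) n (@leq_pmull n 3 isT).
have e2 := @bin_fact (2 * n) n (@leq_pmull n 2 isT).
rewrite (_ : 3 * n - n = 2 * n) in e3; last by lia.
rewrite (_ : 2 * n - n = n) in e2; last by lia.
by rewrite -e3 -e2 /multinom3; ring.
Qed.

Lemma count_balanced n : count (balanced n) (words _ (3 * n)) = multinom3 n.
Proof.
have := count_has_counts_fact (fun _ : 'I_3 => n).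
rewrite sum_nat_const prod_nat_const !card_ord -multinom3_fact => /eqP.
by rewrite eqn_pmul2r ?expn_gt0 ?fact_gt0 // => /eqP.
Qed.

Lemma multinom3_gt0 n : 0 < multinom3 n.
Proof. by rewrite muln_gt0 !bin_gt0 leq_pmull ?leq_pmull. Qed.

Lemma multinom3S n :
  multinom3 n.+1 * n.+1 ^ 3 = multinom3 n * ((3 * n).+1 * (3 * n).+2 * (3 * n).+3).
Proof.
have fact3_gt0 : 0 < n`! ^ 3 by rewrite expn_gt0 fact_gt0.
apply/eqP; rewrite -(eqn_pmul2r fact3_gt0) -mulnA -expnMn -factS.
rewrite multinom3_fact mulnAC multinom3_fact (_ : 3 * n.+1 = (3 * n).+3) ?factS; last lia.
by apply/eqP; ring.
Qed.

(* (n+1) binom(3(n+1); n+1,n+1,n+1) / 27^n is nondecreasing and equals 6 at n = 0. *)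
Lemma multinom3_lower_bound n : 6 * 27 ^ n <= n.+1 * multinom3 n.+1.
Proof.
elim: n => // n IHn; rewrite expnS mulnCA.
apply: leq_trans (leq_mul (leqnn 27) IHn) _.
rewrite -(@leq_pmul2r (n.+2 ^ 3)) ?expn_gt0 // -[leqRHS]mulnA multinom3S.
have : 27 * (n.+1 * n.+2 ^ 3) <= n.+2 * ((3 * n.+1).+1 * (3 * n.+1).+2 * (3 * n.+1).+3).
  by rewrite !expnS expn0; nia.
move: (multinom3 n.+1) (n.+2 ^ 3) ((3 * n.+1).+1 * _ * _) => M c P key.
have -> : 27 * (n.+1 * M) * c = M * (27 * (n.+1 * c)) by ring.
by rewrite [leqRHS]mulnCA leq_mul2l key orbT.
Qed.

Definition first_diag_visit (s : seq 'I_3) : nat :=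
  (find (fun i => on_diag (take i.+1 s)) (iota 0 (size s))).+1.

Definition diag_free (s : seq 'I_3) : bool :=
  all (fun i => (0 < i) ==> ~~ on_diag (take i s)) (iota 0 (size s)).

Lemma diag_free_take s t : t <= size s ->
  reflect (forall i, 0 < i < t -> ~~ on_diag (take i s)) (diag_free (take t s)).
Proof.
move=> t_s; rewrite /diag_free size_takel //.
apply: (iffP allP) => [free i /andP[i_gt0 i_t] | free i].
  by have := free i; rewrite mem_iota i_gt0 i_t take_takel ?(ltnW i_t) // => /(_ isT).
rewrite mem_iota /= => i_t; apply/implyP => i_gt0.
by rewrite take_takel ?(ltnW i_t) //; apply: free; rewrite i_gt0.
Qed.

Lemma first_diag_visitP s t : on_diag s -> 0 < size s ->
  (first_diag_visit s == t) =
    [&& 0 < t, t <= size s, on_diag (take t s) & diag_free (take t s)].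
Proof.
move=> diag_s s_gt0; set P := fun i => on_diag (take i.+1 s).
have hasP : has P (iota 0 (size s)).
  apply/hasP; exists (size s).-1; first by rewrite mem_iota /=; lia.
  by rewrite /P prednK // take_size.
have j_s : find P (iota 0 (size s)) < size s.
  by rewrite -[X in _ < X](size_iota 0) -has_find.
have Pj : P (find P (iota 0 (size s))).
  by have := nth_find 0 hasP; rewrite nth_iota.
rewrite /first_diag_visit -/P; set j := find P _ in j_s Pj *.
have notP i : i < j -> ~~ P i.
  move=> i_j; have := before_find 0 i_j.
  by rewrite nth_iota ?add0n => [->|]; last exact: ltn_trans j_s.
apply/eqP/and4P => [<- | [t_gt0 t_s diag_t /diag_free_take free_t]].
  split=> //; apply/diag_free_take => // -[|i] //= i_j.
  exact: notP.
case: (ltngtP j.+1 t) => [j_t | t_j | //].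
  by move: (free_t t_s j.+1); rewrite j_t /= => /(_ isT)/negP.
have t1_j : t.-1 < j by lia.
by have := notP _ t1_j; rewrite /P prednK // diag_t.
Qed.

Definition first_diag_level (s : seq 'I_3) : nat :=
  count_mem st0 (take (first_diag_visit s) s).

Lemma eq_first_diag_level n l s : 0 < n -> balanced n s ->
  (first_diag_level s == l) =
  [&& 0 < l, l <= n, balanced l (take (3 * l) s) & diag_free (take (3 * l) s)].
Proof.
move=> n_gt0 bal_s; move: (bal_s); rewrite balancedE => /andP[diag_s /eqP size_s].
have s_gt0 : 0 < size s by rewrite size_s muln_gt0.
have := first_diag_visitP (first_diag_visit s) diag_s s_gt0.
rewrite eqxx => /esym/and4P[_ t_s diag_t _].
rewrite /first_diag_level -(eqn_pmul2l (isT : 0 < 3)) -size_on_diag ?size_takel //.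
rewrite first_diag_visitP // size_s leq_mul2l muln_gt0 /= balancedE.
case: (leqP l n) => [l_n | n_l]; last by rewrite !andbF.
by rewrite size_takel ?size_s ?leq_mul2l ?l_n // eqxx andbT.
Qed.

Lemma XnE n (p : {ffun 'I_(3 * n) -> 'I_3}) :
  Xn p = n - first_diag_level (codom p).
Proof.
by rewrite /Xn /first_return_time /first_diag_level /first_diag_visit size_codom card_ord.
Qed.

Lemma avoids_diagE n (p : {ffun 'I_(3 * n) -> 'I_3}) :
  avoids_diag p = diag_free (codom p).
Proof.
rewrite /avoids_diag /diag_free size_codom card_ord.
apply/forallP/allP => [free i | free i]; last by apply: free; rewrite mem_iota ltn_ord.
by rewrite mem_iota => /andP[_ i_lt]; apply: (free (Ordinal i_lt)).
Qed.

Lemma a1E l : 0 < l ->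
  a1 l = count (fun s => balanced l s && diag_free s) (words _ (3 * l)).
Proof.
rewrite /a1 lt0n => /negbTE ->; rewrite -count_words_codom.
by apply: eq_card => p; rewrite !inE avoids_diagE.
Qed.

Lemma card_lpaths n : #|lpaths n| = multinom3 n.
Proof.
by rewrite -count_balanced -count_words_codom; apply: eq_card => p; rewrite !inE.
Qed.

Lemma first_diag_level_split n l s : 0 < n -> 0 < l <= n ->
  balanced n s && (first_diag_level s == l) =
  (balanced l (take (3 * l) s) && diag_free (take (3 * l) s))
    && balanced (n - l) (drop (3 * l) s).
Proof.
move=> n_gt0 /andP[l_gt0 l_n].
have /= := @has_counts_take_drop _ (fun=> n) (fun=> l) (3 * l) s (fun=> l_n).
case bal_s: (balanced n s) => /= bal_split.
  by rewrite (eq_first_diag_level _ n_gt0 bal_s) l_gt0 l_n [RHS]andbAC -bal_split.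
by rewrite [RHS]andbAC -bal_split.
Qed.

Lemma count_first_diag_level n l : 0 < n -> l <= n ->
  count (fun s => balanced n s && (first_diag_level s == l)) (words _ (3 * n)) =
  a1 l * multinom3 (n - l).
Proof.
move=> n_gt0 l_n; case: (posnP l) => [-> | l_gt0].
  rewrite (@eq_count _ _ pred0) ?count_pred0 // => s.
  by apply/negbTE/andP => -[bal_s]; rewrite (eq_first_diag_level _ n_gt0 bal_s).
rewrite (eq_count (fun s => first_diag_level_split s n_gt0 (introT andP (conj l_gt0 l_n)))).
have -> : 3 * n = 3 * l + 3 * (n - l) by lia.
rewrite (count_words_take_drop (fun s => balanced l s && diag_free s) (balanced (n - l))).
by rewrite a1E // count_balanced.
Qed.

Lemma card_first_diag_level n l : 0 < n -> l <= n ->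
  #|[set p in lpaths n | n - Xn p == l]| = a1 l * multinom3 (n - l).
Proof.
move=> n_gt0 l_n; rewrite -count_first_diag_level // -count_words_codom.
apply: eq_card => p; rewrite !inE XnE -[balanced n _]/(is_lpath p).
case bal_p: (is_lpath p) => //=; move/forallP: bal_p => /(_ st0)/eqP count_p.
by rewrite subKn // -[X in _ <= X]count_p leq_count_subseq ?take_subseq.
Qed.

Section Convolution.
Local Open Scope ring_scope.

Lemma sum_convolution (R : pzSemiRingType) (f u : nat -> R) N :
  \sum_(n < N) \sum_(l < n.+1) f l * u (n - l)%N =
  \sum_(l < N) f l * \sum_(k < N - l) u k.
Proof.
elim: N => [|N IHN]; first by rewrite !big_ord0.
rewrite big_ord_recr /= IHN [in RHS]big_ord_recr [X in _ + X = _]big_ord_recr /=.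
rewrite subnn subSnn big_ord1 addrA -big_split /=; congr (_ + _).
by apply: eq_bigr => l _; rewrite subSn 1?ltnW // big_ord_recr mulrDr.
Qed.

End Convolution.

Section Distribution.
Variable R : realType.
Local Open Scope ring_scope.
Local Open Scope classical_set_scope.

Lemma probX_le1 n E : probX R n E <= 1.
Proof.
rewrite /probX ler_pdivrMr ?mul1r ?ler_nat ?subset_leq_card ?setIdE ?subsetIl //.
by rewrite ltr0n card_lpaths multinom3_gt0.
Qed.

Lemma eq_probX n (E E' : pred nat) : {in [pred x | x <= n]%N, E =1 E'} ->
  probX R n E = probX R n E'.
Proof.
move=> eqE; congr (_%:R / _); apply: eq_card => p.
by rewrite !inE eqE // inE /Xn leq_subr.
Qed.

Lemma probX_lt n (h : nat -> nat) K :
  probX R n (fun X => h X < K)%N = \sum_(j < K) probX R n (fun X => h X == j).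
Proof.
by rewrite /probX (card_set_lt _ (h \o @Xn n)) natr_sum mulr_suml.
Qed.

Lemma probX_first_diag_level n l : (0 < n)%N -> (l <= n)%N ->
  probX R n (fun X => n - X == l)%N =
    (a1 l)%:R * (multinom3 (n - l))%:R / (multinom3 n)%:R.
Proof. by move=> n_gt0 l_n; rewrite /probX card_first_diag_level // card_lpaths natrM. Qed.

Definition first_return_prob (l : nat) : R := (a1 l)%:R / 27%:R ^+ l.

Lemma ler_nat_div a b c d : (0 < b)%N -> (0 < d)%N ->
  (a%:R / b%:R <= c%:R / d%:R :> R) = (a * d <= c * b)%N.
Proof.
move=> b_gt0 d_gt0.
by rewrite ler_pdivrMr ?ltr0n // mulrAC ler_pdivlMr ?ltr0n // -!natrM ler_nat.
Qed.

Lemma multinom3_neq0 n : (multinom3 n)%:R != 0 :> R.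
Proof. by rewrite pnatr_eq0 -lt0n multinom3_gt0. Qed.

Lemma multinom3_ratio m : (multinom3 m)%:R / (multinom3 m.+1)%:R =
  (m.+1 ^ 3)%:R / ((3 * m).+1 * (3 * m).+2 * (3 * m).+3)%:R :> R.
Proof.
apply/eqP; rewrite eqr_div ?multinom3_neq0 ?pnatr_eq0 //.
by rewrite -!natrM -multinom3S mulnC.
Qed.

Lemma cvg_multinom3_ratioS :
  (fun m => (multinom3 m)%:R / (multinom3 m.+1)%:R : R) @ \oo --> (27%:R^-1 : R).
Proof.
apply: (@squeeze_cvgr _ _ _ _ (fun=> 27%:R^-1) (fun m => 27%:R^-1 + harmonic m)).
- near=> m; rewrite multinom3_ratio; apply/andP; split.
    rewrite (_ : 27%:R^-1 = 1%:R / 27%:R :> R); last by rewrite div1r.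
    by rewrite ler_nat_div ?muln_gt0 // !expnS expn0; nia.
  have -> : 27%:R^-1 + harmonic m = (m + 28)%:R / (27 * m.+1)%:R :> R.
    by rewrite /harmonic /= -addn1 natrM !natrD; field; rewrite addrC natr1 pnatr_eq0.
  by rewrite ler_nat_div ?muln_gt0 // !expnS expn0; nia.
- exact: cvg_cst.
- by rewrite -[X in _ --> X]addr0; apply: cvgD; [exact: cvg_cst | exact: cvg_harmonic].
Unshelve. all: by end_near.
Qed.

Lemma cvg_multinom3_ratio l :
  (fun m => (multinom3 m)%:R / (multinom3 (m + l))%:R : R) @ \oo -->
    ((27%:R ^+ l)^-1 : R).
Proof.
elim: l => [|l IHl].
  rewrite expr0 invr1; under eq_cvg do rewrite addn0 divff ?multinom3_neq0 //.
  exact: cvg_cst.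
have split_ratio m : (multinom3 m)%:R / (multinom3 (m + l.+1))%:R =
    (multinom3 m)%:R / (multinom3 (m + l))%:R *
    ((multinom3 (m + l))%:R / (multinom3 (m + l).+1)%:R) :> R.
  by rewrite addnS mulrA divfK ?multinom3_neq0.
under eq_cvg do rewrite split_ratio.
rewrite exprS invfM mulrC; apply: cvgM => //.
by have := cvg_multinom3_ratioS; rewrite -(cvg_shiftn l).
Qed.

Lemma cvg_probX_first_diag_level l :
  (fun n => probX R n (fun X => n - X == l)%N) @ \oo --> first_return_prob l.
Proof.
rewrite -(cvg_shiftn l.+1) /=.
have shift_eq m : probX R (m + l.+1) (fun X => m + l.+1 - X == l)%N =
    (a1 l)%:R * ((multinom3 m.+1)%:R / (multinom3 (m.+1 + l))%:R).
  rewrite probX_first_diag_level ?addnS // ?leqW ?leq_addl // -mulrA.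
  by rewrite -addSn addnK addSn addnC.
under eq_cvg do rewrite shift_eq.
apply: cvgM; first exact: cvg_cst.
by have := cvg_multinom3_ratio (l := l); rewrite -cvg_shiftS.
Qed.

Lemma cvg_probX_lt K :
  (fun n => probX R n (fun X => n - X < K)%N) @ \oo --> \sum_(j < K) first_return_prob j.
Proof.
under eq_cvg do rewrite probX_lt.
by apply: cvg_big => [|j _]; [exact: add_continuous | exact: cvg_probX_first_diag_level].
Qed.

Lemma first_return_prob_sum_le1 K : \sum_(l < K) first_return_prob l <= 1.
Proof.
apply: (ler_cvg_to (cvg_probX_lt (K := K)) (cvg_cst (1 : R))).
by near=> n; exact: probX_le1.
Unshelve. all: by end_near.
Qed.

Definition diag_prob (n : nat) : R := (multinom3 n)%:R / 27%:R ^+ n.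

Lemma probX_total n : probX R n (fun X => n - X < n.+1)%N = 1.
Proof.
rewrite /probX (_ : [set p in lpaths n | _] = lpaths n) ?divff //.
  by rewrite card_lpaths multinom3_neq0.
by apply/setP => p; rewrite inE ltnS leq_subr andbT.
Qed.

Lemma diag_prob_renewal n : (0 < n)%N ->
  diag_prob n = \sum_(l < n.+1) first_return_prob l * diag_prob (n - l).
Proof.
move=> n_gt0; rewrite -[LHS]mul1r -(probX_total n) probX_lt mulr_suml.
apply: eq_bigr => l _; have l_n : (l <= n)%N by rewrite -ltnS.
rewrite probX_first_diag_level // /first_return_prob /diag_prob.
rewrite (_ : 27%:R ^+ n = 27%:R ^+ l * 27%:R ^+ (n - l) :> R).
  by field; rewrite !expf_neq0 ?multinom3_neq0 ?pnatr_eq0.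
by rewrite -exprD subnKC.
Qed.

Lemma diag_prob_sum_renewal N : (0 < N)%N ->
  \sum_(n < N) diag_prob n =
  1 + \sum_(l < N) first_return_prob l * \sum_(k < N - l) diag_prob k.
Proof.
case: N => // N _; rewrite -sum_convolution big_ord_recl [in RHS]big_ord_recl /=.
rewrite big_ord1 /=.
have -> : first_return_prob 0 = 0 by rewrite /first_return_prob mul0r.
have -> : diag_prob 0 = 1 by rewrite /diag_prob expr0 divr1.
by rewrite mul0r add0r; congr (_ + _); apply: eq_bigr => n _; rewrite -diag_prob_renewal.
Qed.

Lemma diag_prob_ge0 n : 0 <= diag_prob n.
Proof. by rewrite divr_ge0. Qed.

Lemma first_return_prob_ge0 l : 0 <= first_return_prob l.
Proof. by rewrite divr_ge0. Qed.

Lemma first_return_prob_sum_lower_bound N : (0 < N)%N ->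
  1 - (\sum_(n < N) diag_prob n)^-1 <= \sum_(l < N) first_return_prob l.
Proof.
move=> N_gt0; set S := \sum_(n < N) diag_prob n.
have S_renewal := diag_prob_sum_renewal N_gt0; rewrite -/S in S_renewal.
have S_gt0 : 0 < S.
  rewrite S_renewal (lt_le_trans ltr01) // lerDl.
  apply: sumr_ge0 => l _; rewrite mulr_ge0 ?first_return_prob_ge0 //.
  by apply: sumr_ge0 => k _; exact: diag_prob_ge0.
have : S <= 1 + (\sum_(l < N) first_return_prob l) * S.
  rewrite [X in X <= _]S_renewal lerD2l mulr_suml; apply: ler_sum => l _.
  rewrite ler_wpM2l ?first_return_prob_ge0 // (big_ord_widen N _ (leq_subr l N)) big_mkcond.
  by apply: ler_sum => k _; case: ifP => // _; exact: diag_prob_ge0.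
move=> S_le; rewrite -(ler_pM2r S_gt0) mulrBl mulVf ?gt_eqF // mul1r; lra.
Qed.

Lemma diag_prob_lower_bound k : 2%:R / 9%:R * harmonic k <= diag_prob k.+1.
Proof.
rewrite /diag_prob /harmonic /= ler_pdivlMr ?exprn_gt0 ?ltr0n //.
rewrite mulrAC ler_pdivrMr ?ltr0n //.
move: (multinom3 k.+1) (multinom3_lower_bound k) => M.
rewrite -(ler_nat R) !natrM natrX exprS; lra.
Qed.

Lemma cvg_diag_prob_sum : (fun N => \sum_(n < N) diag_prob n) @ \oo --> +oo.
Proof.
have harmonic_cvgy : series (@harmonic R) @ \oo --> +oo.
  apply: nondecreasing_dvgn_lt (@dvg_harmonic R).
  by apply: nondecreasing_series => n _ _; exact: harmonic_ge0.
rewrite -cvg_shiftS; apply: (@ger_cvgy _ _ _ _ (fun N => 2%:R / 9%:R * series harmonic N)).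
  near=> N => /=; rewrite big_ord_recl seriesEord mulr_sumr /=.
  rewrite -[X in X <= _]add0r lerD ?diag_prob_ge0 //; apply: ler_sum => k _.
  exact: diag_prob_lower_bound.
apply/cvgryPge => A; near=> N; rewrite -ler_pdivrMl ?divr_gt0 ?ltr0n //.
by near: N; move/cvgryPge: harmonic_cvgy; apply.
Unshelve. all: by end_near.
Qed.

Lemma cvg_first_return_prob_series : series first_return_prob @ \oo --> (1 : R).
Proof.
apply: (@squeeze_cvgr _ _ _ _ (fun N => 1 - (\sum_(n < N) diag_prob n)^-1) (fun=> 1)).
- near=> N; rewrite seriesEord first_return_prob_sum_le1 andbT.
  by apply: first_return_prob_sum_lower_bound; near: N; exact: nbhs_infty_gt.
- rewrite -[X in _ --> X]subr0; apply: cvgB; first exact: cvg_cst.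
  apply/gtr0_cvgV0; last exact: cvg_diag_prob_sum.
  by move/cvgryPgt: cvg_diag_prob_sum; apply.
- exact: cvg_cst.
Unshelve. all: by end_near.
Qed.

End Distribution.

Local Open Scope classical_set_scope.
Local Open Scope ring_scope.

Theorem proposition3p5 (R : realType) :
  (forall n k : nat, (1 <= n)%N -> (k <= n - 1)%N ->
     probX R n (fun X => X == k) =
       (a1 (n - k))%:R * (multinom3 k)%:R / (multinom3 n)%:R)
  /\ (series (fun l : nat => (a1 l)%:R / 27%:R ^+ l : R) @ \oo --> (1 : R))
  /\ (forall l : nat,
        (fun n : nat => probX R n (fun X => (n - X)%N == l)) @ \oo -->
          ((a1 l)%:R / 27%:R ^+ l : R))
  /\ (forall l : nat,
        (fun n : nat => probX R n (fun X => (n - X <= l)%N)) @ \oo -->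
          (\sum_(j < l.+1) (a1 j)%:R / 27%:R ^+ j : R)).
Proof.
split; [|split; [|split]].
- move=> n k n_gt0 k_lt_n.
  rewrite (@eq_probX _ _ _ (fun X => n - X == n - k)%N) => [|X]; last first.
    by rewrite inE => X_n; apply/eqP/eqP; lia.
  by rewrite probX_first_diag_level ?subKn ?leq_subr //; lia.
- exact: cvg_first_return_prob_series.
- exact: cvg_probX_first_diag_level.
- by move=> l; exact: (cvg_probX_lt (K := l.+1)).
Qed.
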